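(* Let $A$ be a partial magma and $R$ an equivalence relation on $A$ in the category of partial magmas. Then $R$ is effective if and only if it is additive.
   Context: A partial magma is a set $A$ with a distinguished element $0$, a subset $A_2\subseteq A\times A$ of summable pairs and a map $+\colon A_2\to A$, such that $(0,a),(a,0)\in A_2$ and $a+0=0+a=a$ for all $a$, and $(a,b)\in A_2$ implies $(b,a)\in A_2$ and $a+b=b+a$. A homomorphism of partial magmas is a map $f$ with $f(0)=0$, $(f(a_1),f(a_2))\in B_2$ and $f(a_1+a_2)=f(a_1)+f(a_2)$ for $(a_1,a_2)\in A_2$. The product $A\times A$ is the partial magma in which $((a,b),(c,d))$ is summable iff $(a,c)\in A_2$ and $(b,d)\in A_2$, with componentwise sum. A partial submagma of a partial magma $C$ is a subset $D\ni 0$ with a set $D_2\subseteq C_2\cap(D\times D)$ containing all $(0,d),(d,0)$, closed under swapping, such that sums of pairs in $D_2$ lie in $D$. An equivalence relation on $A$ is a partial submagma $R$ of $A\times A$ such that for every partial magma $X$, the set of homomorphisms $X\to R$ is an equivalence relation on the set of homomorphisms $X\to A$ (via $\mathrm{Hom}(X,R)\subseteq \mathrm{Hom}(X,A)\times\mathrm{Hom}(X,A)$). $R$ is effective if there is a homomorphism $f\colon A\to B$ of partial magmas such that $R\rightrightarrows A$ is its kernel pair, i.e. $R=\{(a,a'):f(a)=f(a')\}$ and $R_2$ consists of all pairs of elements of $R$ that are summable in $A\times A$. $R$ is additive if $R_2=(R\times R)\cap(A\times A)_2$. *)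

(** The sum is encoded as a total function [padd] whose values are only
    constrained (and only ever used) on summable pairs. *)
Record pmagma := PMagma {
  car :> Type;
  pzero : car;
  psumm : car -> car -> Prop;
  padd : car -> car -> car;
  psumm0l : forall a, psumm pzero a;
  psumm0r : forall a, psumm a pzero;
  padd0l : forall a, padd pzero a = a;
  padd0r : forall a, padd a pzero = a;
  psummC : forall a b, psumm a b -> psumm b a;
  paddC : forall a b, psumm a b -> padd a b = padd b a
}.

Arguments pzero {_}.
Arguments psumm {_} _ _.
Arguments padd {_} _ _.

Definition is_hom (A B : pmagma) (f : A -> B) : Prop :=
  f pzero = pzero /\
  forall a1 a2, psumm a1 a2 ->
    psumm (f a1) (f a2) /\ f (padd a1 a2) = padd (f a1) (f a2).

Definition prod_summ (A : pmagma) (p q : A * A) : Prop :=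
  psumm (fst p) (fst q) /\ psumm (snd p) (snd q).
Definition prod_add (A : pmagma) (p q : A * A) : A * A :=
  (padd (fst p) (fst q), padd (snd p) (snd q)).
Definition prod_zero (A : pmagma) : A * A := (pzero, pzero).

Record psubmagma2 (A : pmagma) := PSub {
  rel : A * A -> Prop;
  rel2 : A * A -> A * A -> Prop;
  rel_zero : rel (prod_zero A);
  rel2_sub : forall p q, rel2 p q -> prod_summ A p q /\ rel p /\ rel q;
  rel2_zero : forall d, rel d -> rel2 (prod_zero A) d /\ rel2 d (prod_zero A);
  rel2_sym : forall p q, rel2 p q -> rel2 q p;
  rel2_add : forall p q, rel2 p q -> rel (prod_add A p q)
}.

Arguments rel {_} _ _.
Arguments rel2 {_} _ _ _.

Definition is_hom_sub (X A : pmagma) (R : psubmagma2 A) (g : X -> A * A) : Prop :=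
  g pzero = prod_zero A /\
  (forall x, rel R (g x)) /\
  forall x1 x2, psumm x1 x2 ->
    rel2 R (g x1) (g x2) /\ g (padd x1 x2) = prod_add A (g x1) (g x2).

(** The relation on Hom(X, A) induced by Hom(X, R) ⊆ Hom(X,A) x Hom(X,A). *)
Definition hom_rel (X A : pmagma) (R : psubmagma2 A) (f1 f2 : X -> A) : Prop :=
  is_hom_sub X A R (fun x => (f1 x, f2 x)).

Definition is_equiv_rel (A : pmagma) (R : psubmagma2 A) : Prop :=
  forall X : pmagma,
    (forall f, is_hom X A f -> hom_rel X A R f f) /\
    (forall f1 f2, is_hom X A f1 -> is_hom X A f2 ->
        hom_rel X A R f1 f2 -> hom_rel X A R f2 f1) /\
    (forall f1 f2 f3, is_hom X A f1 -> is_hom X A f2 -> is_hom X A f3 ->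
        hom_rel X A R f1 f2 -> hom_rel X A R f2 f3 -> hom_rel X A R f1 f3).

Definition effective (A : pmagma) (R : psubmagma2 A) : Prop :=
  exists (B : pmagma) (f : A -> B),
    is_hom A B f /\
    (forall a a', rel R (a, a') <-> f a = f a') /\
    (forall p q, rel2 R p q <-> (rel R p /\ rel R q /\ prod_summ A p q)).

Definition additive (A : pmagma) (R : psubmagma2 A) : Prop :=
  forall p q, rel2 R p q <-> (rel R p /\ rel R q /\ prod_summ A p q).

From Stdlib Require Import FunctionalExtensionality PropExtensionality RelationClasses.

(* Effectivity implies additivity because the [R_2] of a kernel pair is, by
   definition, everything summable in [A x A].  Conversely, homomorphisms out of
   the partial magma [{0, x}] with only trivial sums are just elements of [A], so
   testing the equivalence-relation property on it shows that [R] is an ordinary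
   equivalence relation on the carrier.  Additivity makes [R] compatible with
   [+], hence summing representatives turns the set of [R]-classes into a partial
   magma, and [R] is the kernel pair of the projection onto it. *)

Definition free1 : pmagma.
Proof.
  refine (PMagma bool false (fun u v => u = false \/ v = false) orb _ _ _ _ _ _).
  - intros; left; reflexivity.
  - intros; right; reflexivity.
  - intros; reflexivity.
  - intros [|]; reflexivity.
  - intros a b [H|H]; [right|left]; exact H.
  - intros [|] [|] _; reflexivity.
Defined.

Definition elem (A : pmagma) (a : A) : free1 -> A :=
  fun u : bool => if u then a else pzero.

Lemma elem_hom (A : pmagma) (a : A) : is_hom free1 A (elem A a).
Proof.
  split; [reflexivity|].
  intros [|] [|] Hs; simpl in *.
  - destruct Hs as [Hs|Hs]; discriminate.
  - split; [apply psumm0r | symmetry; apply padd0r].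
  - split; [apply psumm0l | symmetry; apply padd0l].
  - split; [apply psumm0l | symmetry; apply padd0l].
Qed.

Lemma hom_rel_elem (A : pmagma) (R : psubmagma2 A) (a a' : A) :
  hom_rel free1 A R (elem A a) (elem A a') <-> rel R (a, a').
Proof.
  split; [intros (_ & Hrel & _); exact (Hrel true)|].
  intro Haa'. split; [reflexivity|]. split.
  - intros [|]; simpl; [exact Haa' | apply rel_zero].
  - unfold prod_add.
    intros [|] [|] Hs; simpl in *.
    + destruct Hs as [Hs|Hs]; discriminate.
    + split; [apply rel2_zero, Haa'|]. rewrite !padd0r; reflexivity.
    + split; [apply rel2_zero, Haa'|]. rewrite !padd0l; reflexivity.
    + split; [apply rel2_zero, rel_zero|]. rewrite !padd0l; reflexivity.
Qed.

Lemma is_equiv_rel_Equivalence (A : pmagma) (R : psubmagma2 A) :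
  is_equiv_rel A R -> Equivalence (fun a a' : A => rel R (a, a')).
Proof.
  intro HR. destruct (HR free1) as (Hrefl & Hsym & Htrans). split.
  - intro a. apply hom_rel_elem, Hrefl, elem_hom.
  - intros a b Hab. apply hom_rel_elem, Hsym; try apply elem_hom.
    apply hom_rel_elem, Hab.
  - intros a b c Hab Hbc. apply hom_rel_elem, (Htrans _ (elem A b));
      try apply elem_hom; apply hom_rel_elem; assumption.
Qed.

Lemma additive_rel_add (A : pmagma) (R : psubmagma2 A) (a a' b b' : A) :
  additive A R -> rel R (a, a') -> rel R (b, b') ->
  psumm a b -> psumm a' b' -> rel R (padd a b, padd a' b').
Proof.
  intros HR Haa' Hbb' Hab Hab'.
  apply (rel2_add _ R (a, a') (b, b')), HR.
  repeat split; assumption.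
Qed.

Section Quotient.

Variable A : pmagma.
Variable E : A -> A -> Prop.
Hypothesis E_equiv : Equivalence E.
Hypothesis E_add : forall a a' b b', E a a' -> E b b' ->
  psumm a b -> psumm a' b' -> E (padd a b) (padd a' b').

Definition cls (a : A) : A -> Prop := E a.

Lemma cls_eq (a a' : A) : cls a = cls a' <-> E a a'.
Proof.
  split.
  - intro Heq. change (cls a a'). rewrite Heq. unfold cls. reflexivity.
  - intro Haa'. apply functional_extensionality; intro x.
    apply propositional_extensionality; unfold cls; split; intro Hx.
    + transitivity a; [symmetry|]; assumption.
    + transitivity a'; assumption.
Qed.

Lemma E_padd_zerol (a b : A) : E a pzero -> psumm a b -> E (padd a b) b.
Proof.
  intros Ha Hab. rewrite <- (padd0l A b) at 2.
  apply E_add; [assumption | reflexivity | assumption | apply psumm0l].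
Qed.

Definition qsumm (c d : A -> Prop) : Prop :=
  (exists a b, c = cls a /\ d = cls b /\ psumm a b) \/
  c = cls pzero \/ d = cls pzero.

(* The sum of two classes is the class of a sum of representatives.  The carrier
   also contains predicates that are not classes; the last two clauses make
   [cls pzero] neutral for those as well. *)
Definition qadd (c d : A -> Prop) : A -> Prop := fun x =>
  (exists a b, c = cls a /\ d = cls b /\ psumm a b /\ E (padd a b) x) \/
  (c = cls pzero /\ d x) \/ (d = cls pzero /\ c x).

Lemma qsummC (c d : A -> Prop) : qsumm c d -> qsumm d c.
Proof.
  intros [(a & b & Ha & Hb & Hab) | [H | H]].
  - left. exists b, a. auto using psummC.
  - right; right; exact H.
  - right; left; exact H.
Qed.

Lemma qadd_sym (c d : A -> Prop) (x : A) : qadd c d x -> qadd d c x.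
Proof.
  intros [(a & b & Ha & Hb & Hab & Hx) | [H | H]].
  - left. exists b, a. rewrite <- paddC by exact Hab. auto using psummC.
  - right; right; exact H.
  - right; left; exact H.
Qed.

Lemma qaddC (c d : A -> Prop) : qadd c d = qadd d c.
Proof.
  apply functional_extensionality; intro x.
  apply propositional_extensionality; split; apply qadd_sym.
Qed.

Lemma qadd_cls (a b : A) : psumm a b -> qadd (cls a) (cls b) = cls (padd a b).
Proof.
  intro Hab. apply functional_extensionality; intro x.
  apply propositional_extensionality; split.
  - intros [(a' & b' & Ha & Hb & Hab' & Hx) | [[Ha Hx] | [Hb Hx]]];
      unfold cls in *.
    + apply cls_eq in Ha, Hb. transitivity (padd a' b'); auto.
    + apply cls_eq in Ha. transitivity b; [apply E_padd_zerol|]; assumption.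
    + apply cls_eq in Hb. rewrite paddC by exact Hab.
      transitivity a; [apply E_padd_zerol; [|apply psummC]|]; assumption.
  - intro Hx. left. exists a, b. auto.
Qed.

Lemma qadd0l (d : A -> Prop) : qadd (cls pzero) d = d.
Proof.
  apply functional_extensionality; intro x.
  apply propositional_extensionality; split.
  - intros [(a & b & Ha & -> & Hab & Hx) | [[_ Hx] | [-> Hx]]]; try exact Hx.
    apply cls_eq in Ha. unfold cls.
    transitivity (padd a b); [symmetry; apply E_padd_zerol|]; auto.
    symmetry; exact Ha.
  - intro Hx. right; left. auto.
Qed.

Lemma qadd0r (c : A -> Prop) : qadd c (cls pzero) = c.
Proof. rewrite qaddC. apply qadd0l. Qed.

Definition quotient : pmagma :=
  PMagma (A -> Prop) (cls pzero) qsumm qadd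
    (fun d => or_intror (or_introl eq_refl))
    (fun c => or_intror (or_intror eq_refl))
    qadd0l qadd0r qsummC (fun c d _ => qaddC c d).

Lemma cls_hom : is_hom A quotient cls.
Proof.
  split; [reflexivity|]. intros a b Hab. split.
  - left. exists a, b. auto.
  - symmetry. apply qadd_cls, Hab.
Qed.

End Quotient.

Lemma effective_additive (A : pmagma) (R : psubmagma2 A) :
  effective A R -> additive A R.
Proof. intros (B & f & _ & _ & H2). exact H2. Qed.

Lemma additive_effective (A : pmagma) (R : psubmagma2 A) :
  Equivalence (fun a a' : A => rel R (a, a')) -> additive A R -> effective A R.
Proof.
  intros Hequiv HR.
  pose proof (fun a a' b b' => additive_rel_add A R a a' b b' HR) as Hadd.
  exists (quotient A _ Hequiv Hadd), (cls A (fun a a' => rel R (a, a'))).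
  split; [|split].
  - apply cls_hom.
  - intros a a'. symmetry. apply cls_eq, Hequiv.
  - exact HR.
Qed.

Theorem mainTheorem4 (A : pmagma) (R : psubmagma2 A) :
  is_equiv_rel A R -> (effective A R <-> additive A R).
Proof.
  intro HR. split.
  - apply effective_additive.
  - apply additive_effective, is_equiv_rel_Equivalence, HR.
Qed.
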